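(* Let $f:\mathbb R^d\to\mathbb R$ be convex with a unique minimizer $x^*$. Let $(t_n)_{n\ge1}$ be positive numbers with $\sum_{n\ge1}t_n=\infty$, and let $(x_n)_{n\ge1}$ be a sequence in $\mathbb R^d$ such that $\|x_n-x^*\|\to z$ for some $z\ge0$ and $\sum_{n\ge1}t_n(f(x_n)-f(x^* ))<\infty$. Then $z=0$. *)

From mathcomp Require Import all_boot all_order all_algebra.
From mathcomp Require Import all_classical all_reals all_analysis.
Set Implicit Arguments. Unset Strict Implicit. Unset Printing Implicit Defensive.
Import Order.TTheory GRing.Theory Num.Theory.
Local Open Scope ring_scope.

Definition eucl_norm (R : realType) (d : nat) (v : 'rV[R]_d) : R :=
  Num.sqrt (\sum_(i < d) v ord0 i ^+ 2).

Definition convex_fun (R : realType) (d : nat) (f : 'rV[R]_d -> R) : Prop :=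
  forall (x y : 'rV[R]_d) (l : R), 0 <= l -> l <= 1 ->
    f (l *: x + (1 - l) *: y) <= l * f x + (1 - l) * f y.

Definition unique_minimizer (R : realType) (d : nat) (f : 'rV[R]_d -> R)
  (x : 'rV[R]_d) : Prop :=
  (forall y, f x <= f y) /\ (forall y, (forall w, f y <= f w) -> y = x).

From mathcomp Require Import all_boot all_order all_algebra.
From mathcomp Require Import all_classical all_reals all_analysis.
From mathcomp Require Import ring lra.
Import Order.TTheory GRing.Theory Num.Theory.
Import numFieldNormedType.Exports.
Set Implicit Arguments. Unset Strict Implicit. Unset Printing Implicit Defensive.
Local Open Scope ring_scope.
Local Open Scope classical_set_scope.

(* Suppose z > 0. Measured in the sup norm `|v|` of 'rV, which dominates
   eucl_norm v / d, the x_n eventually stay at distance at least some r > 0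
   from x*.  A convex function on R^d is bounded above on cubes (convexity along
   one coordinate at a time reduces to the vertices), hence continuous, so f
   attains its minimum over the compact sphere of radius r around x*, and this
   minimum exceeds f x* by some c > 0 because x* is the unique minimizer.
   Convexity along the rays from x* carries the gap c to every point outside the
   sphere, so t_n (f x_n - f x* ) >= c t_n eventually, and the weighted series
   diverges along with the series of the t_n. *)

Section RowNorms.
Variables (R : realType) (d : nat).
Implicit Types v : 'rV[R]_d.

Lemma mx_norm_leP v e : 0 <= e -> (`|v| <= e) <-> (forall i, `|v ord0 i| <= e).
Proof.
move=> e0; rewrite [`|v|]/Num.norm /= mx_normrE; split.
  move=> v_le i; apply: le_trans v_le.
  exact: (le_bigmax _ (fun ij : 'I_1 * 'I_d => `|v ij.1 ij.2|) (ord0, i)).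
move=> v_le; apply/bigmax_leP; split => // -[a b] _ /=.
by rewrite (ord1 a); apply: v_le.
Qed.

Lemma mx_norm_ge_coord v i : `|v ord0 i| <= `|v|.
Proof. by move: (lexx `|v|) => /(mx_norm_leP v (normr_ge0 v)). Qed.

Lemma eucl_norm_le_mx_norm v : eucl_norm v <= d%:R * `|v|.
Proof.
have dv_ge0 : 0 <= d%:R * `|v| by rewrite mulr_ge0.
rewrite /eucl_norm -(ger0_norm dv_ge0) -sqrtr_sqr ler_sqrt ?exprn_ge0 //.
apply: (@le_trans _ _ (\sum_(i < d) `|v| ^+ 2)).
  apply: ler_sum => i _; rewrite -real_normK ?num_real //.
  by rewrite lerXn2r ?nnegrE ?mx_norm_ge_coord.
rewrite sumr_const card_ord exprMn -[_ *+ d]mulr_natl ler_wpM2r ?exprn_ge0 //.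
by rewrite -natrX ler_nat; case: (d) => // n; rewrite expnS expn1 leq_pmulr.
Qed.
End RowNorms.

Section ConvexRowFunction.
Variables (R : realType) (d : nat) (f : 'rV[R]_d -> R).
Hypothesis f_convex : convex_fun f.

Lemma convex_le_max x y l : 0 <= l -> l <= 1 ->
  f (l *: x + (1 - l) *: y) <= Num.max (f x) (f y).
Proof.
move=> l0 l1; apply: le_trans (f_convex x y l0 l1) _.
have fx : f x <= Num.max (f x) (f y) by rewrite le_max lexx.
have fy : f y <= Num.max (f x) (f y) by rewrite le_max lexx orbT.
have l1' : 0 <= 1 - l by rewrite subr_ge0.
apply: le_trans (lerD (ler_wpM2l l0 fx) (ler_wpM2l l1' fy)) _.
by rewrite -mulrDl addrC subrK mul1r.
Qed.

Section Cube.
Variables (y : 'rV[R]_d) (e : R).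
Hypothesis e_gt0 : 0 < e.

Definition cube_vertex (s : {ffun 'I_d -> bool}) : 'rV[R]_d :=
  \row_i (y ord0 i + (if s i then e else - e)).

Lemma convex_le_cube_vertices B : (forall s, f (cube_vertex s) <= B) ->
  forall w, `|w - y| <= e -> f w <= B.
Proof.
move=> fvB.
suff cube_face k : (k <= d)%N -> forall w, `|w - y| <= e ->
    (forall i : 'I_d, (k <= i)%N -> `|w ord0 i - y ord0 i| = e) -> f w <= B.
  by move=> w wy; apply: (cube_face d) => // i; rewrite leqNgt ltn_ord.
elim: k => [_ w _ w_vertex | k IHk kd w wy w_face].
  suff -> : w = cube_vertex [ffun i => y ord0 i <= w ord0 i] by [].
  apply/rowP => i; rewrite !mxE ffunE; have := w_vertex i (leq0n _).
  by case: lerP => _ <-; ring.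
pose i0 := Ordinal kd.
pose move_to a := \row_j (if j == i0 then y ord0 i0 + a else w ord0 j).
have move_to_le a : `|a| = e -> f (move_to a) <= B.
  move=> ae; apply: IHk; first exact: ltnW.
    apply/(mx_norm_leP _ (ltW e_gt0)) => j; rewrite !mxE.
    case: eqP => [->|_]; first by rewrite addrAC subrr add0r ae.
    by move: wy => /(mx_norm_leP _ (ltW e_gt0))/(_ j); rewrite !mxE.
  move=> i ki; rewrite !mxE; case: eqP => [->|/eqP i_neq].
    by rewrite addrAC subrr add0r.
  apply: w_face; rewrite ltn_neqAle ki andbT.
  by apply: contra i_neq => /eqP ik; apply/eqP/val_inj.
have /andP[wl wr] : - e <= w ord0 i0 - y ord0 i0 <= e.
  by rewrite -ler_norml; move: wy => /(mx_norm_leP _ (ltW e_gt0))/(_ i0); rewrite !mxE.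
set a := w ord0 i0 - y ord0 i0 in wl wr.
pose l := (e - a) / (2 * e).
have -> : w = l *: move_to (- e) + (1 - l) *: move_to e.
  apply/rowP => j; rewrite !mxE; case: eqP => [->|_]; last by ring.
  by rewrite /l /a; field; rewrite gt_eqF.
apply: le_trans (convex_le_max _ _ _ _) _.
- by rewrite divr_ge0 //; lra.
- by rewrite ler_pdivrMr ?mulr_gt0 //; lra.
- by rewrite ge_max !move_to_le ?normrN ?gtr0_norm.
Qed.

End Cube.

Lemma convex_locally_bounded y e : 0 < e ->
  exists B, forall w, `|w - y| <= e -> f w <= B.
Proof.
move=> e_gt0; exists (\sum_s `|f (cube_vertex y e s)|).
apply: convex_le_cube_vertices => // s; apply: le_trans (ler_norm _) _.
by rewrite (bigD1 s) //= lerDl sumr_ge0.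
Qed.

Lemma convex_local_lipschitz y B : (forall w, `|w - y| <= 1 -> f w <= B) ->
  forall w, `|w - y| <= 1 -> `|f w - f y| <= `|w - y| * (B - f y).
Proof.
move=> fB w wy.
have [->|w_neq_y] := eqVneq w y; first by rewrite !subrr !normr0 mul0r.
have s_gt0 : 0 < `|w - y| by rewrite normr_gt0 subr_eq0.
set s := `|w - y| in wy s_gt0 *.
have fyB : f y <= B by apply: fB; rewrite subrr normr0.
(* w lies between y and u 1, and y between w and u (-1). *)
pose u c := y + (c / s) *: (w - y).
have fuB c : `|c| = 1 -> f (u c) <= B.
  move=> c1; apply: fB; rewrite addrAC subrr add0r normrZ normf_div c1 gtr0_norm //.
  by rewrite div1r mulVf ?gt_eqF.
have upper : f w <= s * B + (1 - s) * f y.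
  have -> : w = s *: u 1 + (1 - s) *: y.
    by apply/rowP => j; rewrite !mxE; field; rewrite gt_eqF.
  apply: le_trans (f_convex _ _ (ltW s_gt0) wy) _.
  by rewrite lerD2r ler_wpM2l ?(ltW s_gt0) ?fuB ?normr1.
have lower : (1 + s) * f y <= f w + s * B.
  have s1_gt0 : 0 < 1 + s by rewrite addr_gt0.
  have l0 : 0 <= (1 + s)^-1 by rewrite invr_ge0 ltW.
  have l1 : (1 + s)^-1 <= 1 by rewrite invf_le1 // lerDl ltW.
  have -> : y = (1 + s)^-1 *: w + (1 - (1 + s)^-1) *: u (- 1).
    by apply/rowP => j; rewrite !mxE; field; rewrite ?gt_eqF.
  rewrite -ler_pdivlMl // mulrDr (_ : (1 + s)^-1 * (s * B) = (1 - (1 + s)^-1) * B).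
    apply: le_trans (f_convex _ _ l0 l1) _.
    by rewrite lerD2l ler_wpM2l ?subr_ge0 ?fuB ?normrN ?normr1.
  by field; rewrite gt_eqF.
rewrite ler_norml; apply/andP; split; nra.
Qed.

Lemma convex_continuous : continuous f.
Proof.
move=> y; have [B fB] := convex_locally_bounded y ltr01.
have fyB : f y <= B by apply: fB; rewrite subrr normr0.
have K_gt0 : 0 < B - f y + 1 by lra.
apply/(@cvgrPdist_le _ _ _ _ (nbhs_filter y)) => e e_gt0.
have rho_gt0 : 0 < Num.min 1 (e / (B - f y + 1)) by rewrite lt_min ltr01 divr_gt0.
apply: filterS (nbhsx_ballx y _ rho_gt0) => w.
rewrite -ball_normE /= lt_min distrC => /andP[/ltW wy1 /ltW wy].
rewrite distrC; apply: le_trans (convex_local_lipschitz fB wy1) _.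
rewrite ler_pdivlMr // in wy; apply: le_trans wy.
by rewrite ler_wpM2l // lerDl.
Qed.

Lemma convex_unique_min_gap xstar r : unique_minimizer f xstar -> 0 < r ->
  exists2 c, 0 < c & forall v, r <= `|v - xstar| -> f xstar + c <= f v.
Proof.
move=> [fmin fmin_uniq] r_gt0.
pose S := [set v | `|v - xstar| = r].
have radial v : r <= `|v - xstar| -> exists2 p, S p & f p <= f v.
  move=> rv; have v_gt0 : 0 < `|v - xstar| by apply: lt_le_trans rv.
  pose l := r / `|v - xstar|.
  have l0 : 0 <= l by rewrite divr_ge0 ?ltW.
  have l1 : l <= 1 by rewrite ler_pdivrMr ?mul1r.
  exists (l *: v + (1 - l) *: xstar).
    rewrite /S /= scalerBl scale1r -addrA [xstar - _ - _]addrAC subrr add0r.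
    rewrite -scalerBr normrZ ger0_norm //.
    by rewrite divfK ?gt_eqF.
  by apply: le_trans (convex_le_max _ _ l0 l1) _; rewrite ge_max lexx fmin.
have [S0|/set0P S_neq0] := eqVneq S set0.
  by exists 1 => [//|v /radial[p]]; rewrite S0.
have S_closed : closed S.
  have dist_cont : continuous (fun v : 'rV[R]_d => `|v - xstar|).
    move=> v; apply: (cvg_norm (FF := nbhs_filter v)).
    by apply: (cvgB (FF := nbhs_filter v)); [exact: cvg_id|exact: cvg_cst].
  by move/continuous_closedP : dist_cont => /(_ _ (@closed_eq _ r)).
have S_bounded : bounded_set S.
  exists (`|xstar| + r); split=> [|M /ltW rM v Sv]; first exact: num_real.
  apply: le_trans rM; rewrite -Sv addrC -[v in `|v|](subrK xstar).
  exact: ler_normD.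
have [m Sm m_min] := EVT_min_rV S_neq0 (bounded_closed_compact S_bounded S_closed)
  (continuous_subspaceT convex_continuous).
exists (f m - f xstar).
  rewrite subr_gt0 ltNge; apply/negP => fm_le.
  have m_eq : m = xstar by apply: fmin_uniq => w; apply: le_trans fm_le (fmin w).
  by move: Sm; rewrite inE /S /= m_eq subrr normr0 => r0; rewrite -r0 ltxx in r_gt0.
move=> v /radial[q Sq fq]; rewrite addrC subrK; apply: le_trans fq.
by apply: m_min; rewrite inE.
Qed.

End ConvexRowFunction.

Lemma nneseries_lt_pinfty_weighted (R : realType) (t a : nat -> R) (c : R) N :
  (forall n, 0 <= t n) -> (forall n, 0 <= a n) -> 0 < c ->
  (forall n, (N <= n)%N -> c <= a n) ->
  (\sum_(0 <= k <oo) (t k * a k)%:E < +oo)%E ->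
  (\sum_(0 <= k <oo) (t k)%:E < +oo)%E.
Proof.
move=> t_ge0 a_ge0 c_gt0 ca.
have ta_ge0 k : (0 <= (t k * a k)%:E)%E by rewrite lee_fin mulr_ge0.
rewrite (nneseries_split 0 N) => [|k _]; last by rewrite lee_fin.
rewrite (nneseries_split 0 N) // !add0n !sumEFin => ta_fin.
apply: lte_add_pinfty; first by rewrite ltry.
have tail_le : (c%:E * \sum_(N <= k <oo) (t k)%:E <= \sum_(N <= k <oo) (t k * a k)%:E)%E.
  rewrite -nneseriesZl => [|k _]; last by rewrite lee_fin.
  rewrite !ereal_series; apply: lee_nneseries => [k _ _|k Nk].
    by rewrite lee_fin mulr_ge0 // ltW.
  by rewrite lee_fin mulrC ler_wpM2l ?ca.
have tail_ta : (\sum_(N <= k <oo) (t k * a k)%:E < +oo)%E.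
  apply: le_lt_trans (leeDr _ _) ta_fin.
  by rewrite lee_fin sumr_ge0 // => k _; rewrite mulr_ge0.
move: tail_le; case: (\sum_(N <= k <oo) (t k)%:E)%E => [r _|/=|//]; first by rewrite ltry.
by rewrite gt0_muley ?lte_fin // => /le_lt_trans/(_ tail_ta).
Qed.

(* Sequences are indexed by nat starting at 0 (shift of n >= 1). *)
Theorem lemma2 (R : realType) (d : nat) (f : 'rV[R]_d -> R) (xstar : 'rV[R]_d)
  (t : nat -> R) (x : nat -> 'rV[R]_d) (z : R) :
  convex_fun f ->
  unique_minimizer f xstar ->
  (forall n, 0 < t n) ->
  (\sum_(0 <= k <oo) ((t k)%:E) = +oo)%E ->
  0 <= z ->
  (fun n : nat => eucl_norm (x n - xstar)) @ \oo --> z ->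
  (\sum_(0 <= k <oo) ((t k * (f (x k) - f xstar))%:E) < +oo)%E ->
  z = 0.
Proof.
move=> f_convex xstar_min t_gt0 t_sum z_ge0 x_cvg weighted_sum.
apply/eqP; rewrite eq_le z_ge0 andbT leNgt; apply/negP => z_gt0.
pose r := z / (2 * d.+1%:R).
have r_gt0 : 0 < r by rewrite divr_gt0 ?mulr_gt0.
have [c c_gt0 gap] := convex_unique_min_gap f_convex xstar_min r_gt0.
have [N _ x_far] : \forall n \near \oo, r <= `|x n - xstar|.
  move/cvgrPdist_lt : x_cvg => /(_ (z / 2)); rewrite divr_gt0 // => /(_ isT).
  apply: filterS => n; rewrite ltr_norml => /andP[_ x_near].
  have e_le := eucl_norm_le_mx_norm (x n - xstar).
  have d_le : d%:R * `|x n - xstar| <= d.+1%:R * `|x n - xstar|.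
    by rewrite ler_wpM2r // ler_nat.
  rewrite /r ler_pdivrMr ?mulr_gt0 //; nra.
have fx_ge0 n : 0 <= f (x n) - f xstar by rewrite subr_ge0; exact: xstar_min.1.
have fx_gap n : (N <= n)%N -> c <= f (x n) - f xstar.
  by move=> /x_far/gap; rewrite lerBrDl.
have := nneseries_lt_pinfty_weighted (fun n => ltW (t_gt0 n)) fx_ge0 c_gt0 fx_gap
  weighted_sum.
by rewrite t_sum ltxx.
Qed.
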